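(* Let $A,B$ be symmetric $m\times m$ real matrices, let $c_1\ge c_2\ge\dots\ge c_m$ be real constants, and let $\sigma$ be a permutation of $\{1,\dots,m\}$. Then $$\sum_{j=1}^m c_{\sigma(j)}\lambda_j(A+B)\le\sum_{j=1}^m c_{\sigma(j)}\lambda_j(A)+\sum_{j=1}^m c_j\lambda_j(B).$$
   Context: For a symmetric $m\times m$ matrix $M$, $\lambda_1(M)\ge\lambda_2(M)\ge\dots\ge\lambda_m(M)$ denote its eigenvalues in decreasing order. *)

From HB Require Import structures.
From mathcomp Require Import all_boot all_order all_algebra all_fingroup.
Set Implicit Arguments. Unset Strict Implicit. Unset Printing Implicit Defensive.
Import Order.TTheory GRing.Theory Num.Theory.
Local Open Scope ring_scope.

Definition symmetric_mx (R : rcfType) (m : nat) (M : 'M[R]_m) : Prop := M^T = M.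

(* [l] is the list lambda_1(M) >= ... >= lambda_m(M) of the eigenvalues of M,
   counted with (algebraic) multiplicity and in decreasing order, indexed by
   'I_m (index j : 'I_m stands for lambda_{j+1}). *)
Definition eigvals_desc (R : rcfType) (m : nat) (M : 'M[R]_m) (l : 'I_m -> R)
  : Prop :=
  (forall i j : 'I_m, (i <= j)%N -> l j <= l i) /\
  char_poly M = \prod_(i < m) ('X - (l i)%:P).

(* Work over the complex closure R[i], where a hermitian matrix is unitarily
   diagonalisable with real eigenvalues. The heart is Lidskii's inequality: for
   every set S of k indices, sum_(i in S) l_i(A+B) <= sum_(i in S) l_i(A) +
   sum_(j <= k) l_j(B). Let mu = l_k(B) and let P be B with its eigenvalues
   replaced by max(l_j(B) - mu, 0). As quadratic forms A + B <= (A + P) + mu and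
   A <= A + P; intersecting the span of the top i+1 eigenvectors of one matrix
   with the span of the bottom m-i of the other (Courant-Fischer) turns these into
   l_i(A+B) <= l_i(A+P) + mu and l_i(A) <= l_i(A+P). Summing over S and comparing
   traces, tr(A+P) = tr A + sum_(j <= k) l_j(B) - k mu, gives Lidskii. Traces also
   give equality of the total sums, so the weighted inequality follows by Abel
   summation on the permuted differences l(A+B) - l(A) against l(B). *)

From HB Require Import structures.
From mathcomp Require Import all_boot all_order all_algebra all_fingroup.
From mathcomp Require Import complex spectral.
From mathcomp Require Import zify.
Set Implicit Arguments. Unset Strict Implicit. Unset Printing Implicit Defensive.
Import Order.TTheory GRing.Theory Num.Theory Num.Def.
Local Open Scope ring_scope.
Local Open Scope sesquilinear_scope.

Lemma mxtrace_prod_XsubC (R : comNzRingType) m (M : 'M[R]_m) (l : 'I_m -> R) :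
  char_poly M = \prod_(i < m) ('X - (l i)%:P) -> \tr M = \sum_i l i.
Proof.
case: m M l => [|m] M l chM; first by rewrite /mxtrace !big_ord0.
have := char_poly_trace M isT; rewrite chM -(big_map l xpredT (fun x => 'X - x%:P)).
have sz : size (map l (index_enum 'I_m.+1)) = m.+1.
  by rewrite size_map [index_enum _]unlock -enumT -cardT card_ord.
by rewrite -[in X in _`_X]sz coefPn_prod_XsubC ?sz // big_map => /oppr_inj.
Qed.

Lemma char_poly_similar (R : comUnitRingType) m (P D : 'M[R]_m) : P \in unitmx ->
  char_poly (invmx P *m D *m P) = char_poly D.
Proof.
move=> Pu; have conj_mx : char_poly_mx (invmx P *m D *m P) =
    map_mx polyC (invmx P) *m char_poly_mx D *m map_mx polyC P.
  rewrite /char_poly_mx mulmxBr mulmxBl -!map_mxM.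
  by rewrite mul_mx_scalar -scalemxAl -map_mxM mulVmx // map_mx1 scalemx1.
rewrite /char_poly conj_mx !det_mulmx !det_map_mx mulrC mulrA -rmorphM.
by rewrite -det_mulmx mulmxV // det1 mul1r.
Qed.

Lemma mulmx_pid_mx_entry (R : pzRingType) m (a : 'rV[R]_m) r j :
  (a *m pid_mx r) 0 j = if (j < r)%N then a 0 j else 0.
Proof.
rewrite mxE (bigD1 j) //= big1 => [|k kj]; last first.
  by rewrite !mxE (inj_eq val_inj) (negbTE kj) mulr0.
by rewrite !mxE eqxx addr0; case: ifP; rewrite ?mulr1 ?mulr0.
Qed.

Lemma mulmx_copid_mx_entry (R : pzRingType) m (a : 'rV[R]_m) r j :
  (a *m copid_mx r) 0 j = if (j < r)%N then 0 else a 0 j.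
Proof.
have := mulmx_pid_mx_entry a r j; rewrite mulmxBr mulmx1 !mxE => ->.
by case: ifP; rewrite ?subrr ?subr0.
Qed.

Lemma row_col_perm_diag_mx (R : pzRingType) n (s : 'S_n) (d : 'rV[R]_n) :
  row_perm s (col_perm s (diag_mx d)) = diag_mx (col_perm s d).
Proof. by apply/matrixP => i j; rewrite !mxE (inj_eq perm_inj). Qed.

Lemma sum_prefix_shift (V : zmodType) m n (b : 'I_m -> V) (mu : V) : (n <= m)%N ->
  \sum_(j < m) (if (j < n)%N then b j - mu else 0) =
    \sum_(j < m | (j < n)%N) b j - mu *+ n.
Proof.
move=> le_nm; rewrite -big_mkcond /= sumrB.
by rewrite -(big_ord_widen m (fun _ => mu) le_nm) sumr_const card_ord.
Qed.

Section HermitianSpectrum.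
Variable C : numClosedFieldType.

Definition hermitian_mx m (M : 'M[C]_m) := M^t* = M.

Definition unitary_diag_decomp m (M U : 'M[C]_m) (l : 'I_m -> C) :=
  U \is unitarymx /\ M = U^t* *m diag_mx (\row_i l i) *m U.

Definition real_eigvals_desc m (M : 'M[C]_m) (l : 'I_m -> C) :=
  [/\ forall i, l i \is Num.real,
      forall i j : 'I_m, (i <= j)%N -> l j <= l i &
      char_poly M = \prod_(i < m) ('X - (l i)%:P)].

Lemma hermitian_mxD m (X Y : 'M[C]_m) :
  hermitian_mx X -> hermitian_mx Y -> hermitian_mx (X + Y).
Proof. by rewrite /hermitian_mx => hX hY; rewrite linearD /= map_mxD hX hY. Qed.

Lemma dotmx_mulmx_unitary m n (U : 'M[C]_(m, n)) (u v : 'rV_m) :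
  U \is unitarymx -> dotmx (u *m U) (v *m U) = dotmx u v.
Proof. by move=> uU; rewrite !dotmxE trmx_mul map_mxM mulmxA mulmxtVK. Qed.

Lemma dotmx_selfE m (w : 'rV[C]_m) : dotmx w w = \sum_j w 0 j * (w 0 j)^*.
Proof. by rewrite dotmxE mxE; apply: eq_bigr => j _; rewrite !mxE. Qed.

Lemma dotmx_diag m (l : 'I_m -> C) (w : 'rV_m) :
  dotmx (w *m diag_mx (\row_i l i)) w = \sum_j l j * (w 0 j * (w 0 j)^*).
Proof.
rewrite dotmxE mxE; apply: eq_bigr => j _.
by rewrite mul_mx_diag !mxE mulrAC mulrC.
Qed.

Lemma dotmx_unitary_diag_decomp m (M U : 'M[C]_m) l (v : 'rV_m) :
  unitary_diag_decomp M U l ->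
  dotmx (v *m M) v = dotmx (v *m U^t* *m diag_mx (\row_i l i)) (v *m U^t*).
Proof.
case=> uU ->; rewrite !mulmxA -{2}[v](mulmxKtV v uU) //.
exact: dotmx_mulmx_unitary.
Qed.

Lemma unitary_diag_decomp_hermitian m (M U : 'M[C]_m) l :
  (forall i, l i \is Num.real) -> unitary_diag_decomp M U l -> hermitian_mx M.
Proof.
move=> lR [_ ->]; rewrite /hermitian_mx !trmx_mul !map_mxM trmxCK -mulmxA.
rewrite tr_diag_mx map_diag_mx; congr (_ *m (diag_mx _ *m _)).
by apply/rowP => j; rewrite !mxE; apply/CrealP.
Qed.

Lemma char_poly_unitary_diag_decomp m (M U : 'M[C]_m) l :
  unitary_diag_decomp M U l -> char_poly M = \prod_(i < m) ('X - (l i)%:P).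
Proof.
case=> uU ->; rewrite -invmx_unitary // char_poly_similar ?unitarymx_unit //.
rewrite char_poly_trig ?diag_mx_is_trig //.
by apply: eq_bigr => i _; rewrite !mxE eqxx mulr1n.
Qed.

Lemma perm_mx_unitary m (s : 'S_m) : perm_mx s \is @unitarymx C m m.
Proof.
by apply/unitarymxP; rewrite tr_perm_mx map_perm_mx -perm_mxM mulgV perm_mx1.
Qed.

Lemma unitary_diag_decomp_perm m (M U : 'M[C]_m) l l' (s : 'S_m) :
  (forall i, l' i = l (s i)) -> unitary_diag_decomp M U l ->
  unitary_diag_decomp M (perm_mx s *m U) l'.
Proof.
move=> l's [uU ->]; split; first by rewrite mul_unitarymx ?perm_mx_unitary.
have -> : \row_i l' i = col_perm s (\row_i l i) by apply/rowP => i; rewrite !mxE.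
rewrite -row_col_perm_diag_mx row_permE col_permE trmx_mul map_mxM.
have sVs : perm_mx s^-1 *m perm_mx s = 1%:M :> 'M[C]_m.
  by rewrite -perm_mxM mulVg perm_mx1.
by rewrite tr_perm_mx map_perm_mx !mulmxA -!(mulmxA _ (perm_mx s^-1)) sVs !mulmx1.
Qed.

Lemma hermitian_real_diag_decomp m (M : 'M[C]_m) : hermitian_mx M ->
  exists2 d : 'I_m -> C, (forall i, d i \is Num.real) &
    exists U, unitary_diag_decomp M U d.
Proof.
move=> hM; have Mherm : M \is hermsymmx.
  by apply/is_hermitianmxP; rewrite expr0 scale1r hM.
have /orthomx_spectralP eqM := hermitian_normalmx Mherm.
have /mxOverP dR := hermitian_spectral_diag_real Mherm.
exists (fun i => spectral_diag M 0 i) => [i|]; first exact: dR.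
exists (spectralmx M); split; first exact: spectral_unitarymx.
rewrite -invmx_unitary ?spectral_unitarymx // {1}eqM.
by congr (_ *m diag_mx _ *m _); apply/rowP => i; rewrite mxE.
Qed.

Lemma hermitian_real_eigvals_desc m (M : 'M[C]_m) :
  hermitian_mx M -> exists l, real_eigvals_desc M l.
Proof.
move=> /hermitian_real_diag_decomp [d dR [U dec]].
pose s := sort >=%R [seq d i | i <- enum 'I_m].
have s_size : size s = m by rewrite size_sort size_map size_enum_ord.
have dsR : all (mem Num.real) [seq d i | i <- enum 'I_m].
  by rewrite all_map; apply/allP => i _; apply: dR.
have sR : all (mem Num.real) s by rewrite all_sort.
have s_sorted : sorted >=%R s.
  apply: (sort_sorted_in (P := mem Num.real)) dsR => x y xR yR.
  by rewrite /= orbC real_leVge.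
exists (fun i => nth 0 s i); split.
- by move=> i; apply: (allP sR); rewrite mem_nth // s_size.
- move=> i j ij; apply: (sorted_leq_nth_in _ _ _ sR s_sorted) => //.
  + by move=> y x z _ _ _ yx zy; apply: le_trans zy yx.
  + by move=> x _ /=.
  + by rewrite inE s_size.
  + by rewrite inE s_size.
- have -> : \prod_(i < m) ('X - (nth 0 s i)%:P) = \prod_(x <- s) ('X - x%:P).
    by rewrite (big_nth 0) s_size big_mkord.
  rewrite (char_poly_unitary_diag_decomp dec) /s (perm_big _ (permEl (perm_sort _ _))).
  by rewrite big_map big_enum.
Qed.

Lemma hermitian_unitary_diag_decomp m (M : 'M[C]_m) l :
  hermitian_mx M -> char_poly M = \prod_(i < m) ('X - (l i)%:P) ->
  exists U, unitary_diag_decomp M U l.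
Proof.
move=> /hermitian_real_diag_decomp [d _ [U dec]] chM.
have : perm_eq (map_tuple d (ord_tuple m)) (map_tuple l (ord_tuple m)).
  apply: prod_XsubC_eq; rewrite !big_map -!enumT !big_enum /=.
  by rewrite -(char_poly_unitary_diag_decomp dec) chM.
case/tuple_permP => p /val_inj eq_dl.
have dE i : d i = l (p i).
  have := congr1 (fun t => tnth t i) eq_dl.
  by rewrite tnth_mktuple !tnth_map !tnth_ord_tuple.
exists (perm_mx p^-1 *m U); apply: unitary_diag_decomp_perm dec => i.
by rewrite dE permKV.
Qed.

Lemma rayleigh_ge_eigval_pid m (X U : 'M[C]_m) l (i : 'I_m) (v : 'rV_m) :
  unitary_diag_decomp X U l -> (forall i j : 'I_m, (i <= j)%N -> l j <= l i) ->
  (v <= (pid_mx i.+1 : 'M_m) *m U)%MS -> l i * dotmx v v <= dotmx (v *m X) v.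
Proof.
move=> dec l_desc /submxP [a ->]; have [uU _] := dec.
rewrite (dotmx_unitary_diag_decomp _ dec) mulmxA mulmxtVK // dotmx_mulmx_unitary //.
rewrite dotmx_diag dotmx_selfE mulr_sumr; apply: ler_sum => j _.
rewrite mulmx_pid_mx_entry; case: ifP => [ji|_]; last by rewrite !mul0r !mulr0.
by rewrite ler_wpM2r ?mul_conjC_ge0 ?l_desc.
Qed.

Lemma rayleigh_le_eigval_copid m (X U : 'M[C]_m) l (i : 'I_m) (v : 'rV_m) :
  unitary_diag_decomp X U l -> (forall i j : 'I_m, (i <= j)%N -> l j <= l i) ->
  (v <= copid_mx i *m U)%MS -> dotmx (v *m X) v <= l i * dotmx v v.
Proof.
move=> dec l_desc /submxP [a ->]; have [uU _] := dec.
rewrite (dotmx_unitary_diag_decomp _ dec) mulmxA mulmxtVK // dotmx_mulmx_unitary //.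
rewrite dotmx_diag dotmx_selfE mulr_sumr; apply: ler_sum => j _.
rewrite mulmx_copid_mx_entry; case: ifP => [_|ji]; first by rewrite !mul0r !mulr0.
by rewrite ler_wpM2r ?mul_conjC_ge0 ?l_desc // leqNgt ji.
Qed.

Lemma eigval_le_of_dotmx_le m (X Y Ux Uy : 'M[C]_m) lx ly (c : C) (i : 'I_m) :
  unitary_diag_decomp X Ux lx -> unitary_diag_decomp Y Uy ly ->
  (forall i j : 'I_m, (i <= j)%N -> lx j <= lx i) ->
  (forall i j : 'I_m, (i <= j)%N -> ly j <= ly i) ->
  (forall v, dotmx (v *m X) v <= dotmx (v *m Y) v + c * dotmx v v) ->
  lx i <= ly i + c.
Proof.
move=> decX decY lx_desc ly_desc XY.
have [[uUx _] [uUy _]] := (decX, decY).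
pose S1 := (pid_mx i.+1 : 'M_m) *m Ux; pose S2 := copid_mx i *m Uy.
have cap_neq0 : (S1 :&: S2)%MS != 0.
  have rk1 : \rank S1 = i.+1.
    by rewrite mxrankMfree ?row_free_unit ?unitarymx_unit // rank_pid_mx.
  have rk2 : \rank S2 = (m - i)%N.
    by rewrite mxrankMfree ?row_free_unit ?unitarymx_unit // rank_copid_mx // ltnW.
  rewrite -mxrank_eq0; have := mxrank_sum_cap S1 S2; rewrite rk1 rk2.
  have := rank_leq_col (S1 + S2)%MS; have := ltn_ord i; lia.
pose v := nz_row (S1 :&: S2)%MS.
have v_pos : 0 < dotmx v v by rewrite dnorm_gt0 nz_row_eq0.
have lo : lx i * dotmx v v <= dotmx (v *m X) v.
  apply: rayleigh_ge_eigval_pid decX lx_desc _.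
  by rewrite (submx_trans (nz_row_sub _)) ?capmxSl.
have up : dotmx (v *m Y) v <= ly i * dotmx v v.
  apply: rayleigh_le_eigval_copid decY ly_desc _.
  by rewrite (submx_trans (nz_row_sub _)) ?capmxSr.
by rewrite -(ler_pM2r v_pos) mulrDl (le_trans lo) // (le_trans (XY v)) // lerD2r.
Qed.

Lemma dotmx_mulmxDr m (X Y : 'M[C]_m) (v : 'rV_m) :
  dotmx (v *m (X + Y)) v = dotmx (v *m X) v + dotmx (v *m Y) v.
Proof. by rewrite !dotmxE mulmxDr mulmxDl mxE. Qed.

Lemma dotmx_le_of_eigval_le m (X Y U : 'M[C]_m) lx ly (c : C) (v : 'rV_m) :
  unitary_diag_decomp X U lx -> unitary_diag_decomp Y U ly ->
  (forall j, lx j <= ly j + c) ->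
  dotmx (v *m X) v <= dotmx (v *m Y) v + c * dotmx v v.
Proof.
move=> decX decY lxy; have [uU _] := decX.
rewrite (dotmx_unitary_diag_decomp _ decX) (dotmx_unitary_diag_decomp _ decY).
rewrite -{5 6}[v](mulmxKtV v uU) // dotmx_mulmx_unitary // !dotmx_diag dotmx_selfE.
rewrite mulr_sumr -big_split /=; apply: ler_sum => j _.
by rewrite -mulrDl ler_wpM2r ?mul_conjC_ge0.
Qed.

Lemma mxtrace_unitary_diag_decomp m (M U : 'M[C]_m) l :
  unitary_diag_decomp M U l -> \tr M = \sum_i l i.
Proof. by move/char_poly_unitary_diag_decomp/mxtrace_prod_XsubC. Qed.

Lemma lidskii m (A B : 'M[C]_m) a b e :
  hermitian_mx A -> hermitian_mx B ->
  real_eigvals_desc A a -> real_eigvals_desc B b -> real_eigvals_desc (A + B) e ->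
  forall S : {set 'I_m},
  \sum_(i in S) e i <= \sum_(i in S) a i + \sum_(j < m | (j < #|S|)%N) b j.
Proof.
move=> hA hB [_ a_desc chA] [bR b_desc chB] [_ e_desc chE] S.
have [S0|S_gt0] := posnP #|S|.
  by rewrite S0 (cards0_eq S0) !big_set0 big_pred0 ?addr0.
have [k Sk] : exists k, #|S| = k.+1 by exists #|S|.-1; rewrite prednK.
have k_lt_m : (k < m)%N by rewrite -Sk -[m in (_ <= m)%N]card_ord max_card.
pose mu := b (Ordinal k_lt_m).
pose p (j : 'I_m) := if (j < k.+1)%N then b j - mu else 0.
have [Ua decA] := hermitian_unitary_diag_decomp hA chA.
have [Ub decB] := hermitian_unitary_diag_decomp hB chB.
have [Ue decE] := hermitian_unitary_diag_decomp (hermitian_mxD hA hB) chE.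
pose P := Ub^t* *m diag_mx (\row_j p j) *m Ub.
have decP : unitary_diag_decomp P Ub p by split; case: decB.
have p_ge0 j : 0 <= p j by rewrite /p; case: ifP => // jk; rewrite subr_ge0 b_desc.
have hAP : hermitian_mx (A + P).
  apply/hermitian_mxD/(unitary_diag_decomp_hermitian _ decP) => // j.
  by rewrite /p; case: ifP => _; rewrite ?rpredB ?bR.
have [f [_ f_desc chF]] := hermitian_real_eigvals_desc hAP.
have [Uf decF] := hermitian_unitary_diag_decomp hAP chF.
have e_le i : e i <= f i + mu.
  apply: (eigval_le_of_dotmx_le i decE decF e_desc f_desc) => v.
  rewrite !dotmx_mulmxDr -addrA lerD2l; apply: dotmx_le_of_eigval_le decB decP _ => j.
  by rewrite /p; case: leqP => kj; rewrite ?subrK // add0r b_desc // ltnW.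
have a_le i : a i <= f i.
  rewrite -[f i]addr0; apply: (eigval_le_of_dotmx_le i decA decF a_desc f_desc) => v.
  rewrite mul0r addr0 dotmx_mulmxDr lerDl (dotmx_unitary_diag_decomp _ decP) dotmx_diag.
  by apply: sumr_ge0 => j _; rewrite mulr_ge0 ?mul_conjC_ge0.
have sum_b : \sum_(j < m | (j < #|S|)%N) b j = \sum_i (f i - a i) + mu *+ #|S|.
  rewrite sumrB -(mxtrace_prod_XsubC chF) mxtraceD (mxtrace_prod_XsubC chA).
  rewrite (mxtrace_unitary_diag_decomp decP) [_ + \sum_i p i]addrC addrK.
  by rewrite (sum_prefix_shift _ _ k_lt_m) Sk subrK.
apply: le_trans (ler_sum _ (fun i _ => e_le i)) _.
rewrite big_split sumr_const sum_b addrA lerD2r -lerBlDl -sumrB.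
rewrite [leRHS](bigID (mem S)) /= lerDl; apply: sumr_ge0 => i _.
by rewrite subr_ge0 a_le.
Qed.

End HermitianSpectrum.

Section Majorization.
Variable R : realDomainType.

Lemma abel_sum_le (c y : nat -> R) n :
  (forall k, (k.+1 < n)%N -> c k.+1 <= c k) ->
  (forall k, (k <= n)%N -> \sum_(i < k) y i <= 0) ->
  \sum_(i < n) c i * y i <= c n.-1 * \sum_(i < n) y i.
Proof.
elim: n => [|n IHn] c_desc y_le; first by rewrite !big_ord0 mulr0.
rewrite !big_ord_recr /= mulrDr lerD2r.
have IH := IHn (fun k k_lt => c_desc k (ltn_trans k_lt (ltnSn n)))
  (fun k k_le => y_le k (leqW k_le)).
apply: le_trans IH _; case: n {IHn} c_desc y_le => [|n] c_desc y_le //=.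
by rewrite ler_wnM2r ?y_le ?c_desc.
Qed.

Lemma weighted_sum_le_of_prefix_sums m (c x y : 'I_m -> R) :
  (forall i j : 'I_m, (i <= j)%N -> c j <= c i) ->
  (forall k, (k <= m)%N ->
     \sum_(i < m | (i < k)%N) x i <= \sum_(i < m | (i < k)%N) y i) ->
  \sum_i x i = \sum_i y i ->
  \sum_i c i * x i <= \sum_i c i * y i.
Proof.
case: m c x y => [|n] c x y c_desc xy_pre xy_tot; first by rewrite !big_ord0.
pose z k := x (inord k) - y (inord k).
have zE (i : 'I_n.+1) : z i = x i - y i by rewrite /z inord_val.
rewrite -subr_le0 -sumrB.
have -> : \sum_i (c i * x i - c i * y i) = \sum_(i < n.+1) c (inord i) * z i.
  by apply: eq_bigr => i _; rewrite zE inord_val mulrBr.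
apply: le_trans (abel_sum_le (c := fun k => c (inord k)) (y := z) _ _) _.
- by move=> k k_lt; apply: c_desc; rewrite !inordK // ltnW.
- move=> k k_le; rewrite (big_ord_widen _ z k_le) (eq_bigr _ (fun i _ => zE i)).
  by rewrite sumrB subr_le0 xy_pre.
- by rewrite (eq_bigr _ (fun i _ => zE i)) sumrB xy_tot subrr mulr0.
Qed.

Lemma perm_weighted_sum_le m (c d b : 'I_m -> R) (s : 'S_m) :
  (forall i j : 'I_m, (i <= j)%N -> c j <= c i) ->
  (forall S : {set 'I_m}, \sum_(i in S) d i <= \sum_(j < m | (j < #|S|)%N) b j) ->
  \sum_i d i = \sum_i b i ->
  \sum_j c (s j) * d j <= \sum_j c j * b j.
Proof.
move=> c_desc d_le db_tot; rewrite (reindex_inj (@perm_inj _ s^-1)) /=.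
under eq_bigr => i _ do rewrite permKV.
apply: weighted_sum_le_of_prefix_sums => // [k k_le|]; last first.
  rewrite -db_tot (reindex_inj (@perm_inj _ s)).
  by apply: eq_bigr => i _; rewrite permK.
pose S := [set j : 'I_m | (s j < k)%N].
have S_card : #|S| = k.
  rewrite -sum1_card (reindex_inj (@perm_inj _ s^-1)) /=.
  rewrite (eq_bigl (fun i : 'I_m => (i < k)%N)) => [|i]; last by rewrite inE permKV.
  by rewrite -(big_ord_widen m (fun _ => 1%N) k_le) sum1_card card_ord.
have -> : \sum_(i < m | (i < k)%N) d (s^-1 i)%g = \sum_(i in S) d i.
  rewrite (reindex_inj (@perm_inj _ s)).
  by apply: eq_big => [i|i _]; rewrite ?inE ?permK.
by rewrite -[in leRHS]S_card d_le.
Qed.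

End Majorization.

Section RealSymmetric.
Variable R : rcfType.
Local Open Scope complex_scope.

Lemma hermitian_mx_map_real m (M : 'M[R]_m) :
  symmetric_mx M -> hermitian_mx (map_mx (real_complex R) M).
Proof.
move=> symM; apply/matrixP => i j; rewrite !mxE conj_Creal; last first.
  by apply/complex_realP; eexists.
by rewrite -[M in RHS]symM mxE.
Qed.

Lemma real_eigvals_desc_map_real m (M : 'M[R]_m) l : eigvals_desc M l ->
  real_eigvals_desc (map_mx (real_complex R) M) (fun i => (l i)%:C).
Proof.
move=> [l_desc chM]; split => [i|i j ij|].
- by apply/complex_realP; eexists.
- by rewrite lecR l_desc.
- rewrite -map_char_poly chM rmorph_prod; apply: eq_bigr => i _.
  by rewrite rmorphB /= map_polyX map_polyC.
Qed.

Lemma lidskii_symmetric m (A B : 'M[R]_m) lA lB lAB :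
  symmetric_mx A -> symmetric_mx B ->
  eigvals_desc A lA -> eigvals_desc B lB -> eigvals_desc (A + B) lAB ->
  forall S : {set 'I_m},
  \sum_(i in S) lAB i <= \sum_(i in S) lA i + \sum_(j < m | (j < #|S|)%N) lB j.
Proof.
move=> symA symB eA eB eAB S.
have := lidskii (hermitian_mx_map_real symA) (hermitian_mx_map_real symB)
  (real_eigvals_desc_map_real eA) (real_eigvals_desc_map_real eB).
rewrite -map_mxD => /(_ _ (real_eigvals_desc_map_real eAB) S).
by rewrite -!rmorph_sum -rmorphD lecR.
Qed.

End RealSymmetric.

Theorem lemma6p1 (R : rcfType) (m : nat) (A B : 'M[R]_m)
    (lA lB lAB : 'I_m -> R) (c : 'I_m -> R) (sigma : 'S_m) :
  symmetric_mx A -> symmetric_mx B ->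
  eigvals_desc A lA -> eigvals_desc B lB -> eigvals_desc (A + B) lAB ->
  (forall i j : 'I_m, (i <= j)%N -> c j <= c i) ->
  \sum_(j < m) c (sigma j) * lAB j <=
    \sum_(j < m) c (sigma j) * lA j + \sum_(j < m) c j * lB j.
Proof.
move=> symA symB eA eB eAB c_desc.
have trAB : \sum_i (lAB i - lA i) = \sum_i lB i.
  rewrite sumrB -(mxtrace_prod_XsubC eAB.2) -(mxtrace_prod_XsubC eA.2).
  by rewrite -(mxtrace_prod_XsubC eB.2) mxtraceD addrC addKr.
rewrite -lerBlDl -sumrB; under eq_bigr => j _ do rewrite -mulrBr.
apply: perm_weighted_sum_le c_desc _ trAB => S.
by rewrite sumrB lerBlDl (lidskii_symmetric symA symB eA eB eAB).
Qed.
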